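(* In the setting below, let $F,G:\widehat{A}\to\widehat{A}'$ be $\mathcal{A}_\infty$-morphisms with $F_n=G_n=0$ for $n>2$, and let $H$ be an $\mathcal{A}_\infty$ homotopy between $F$ and $G$ with $H_n=0$ for $n>1$. Define $H\boxtimes\mathrm{id}_{DD}:\widehat{A}\to\mathcal{B}'\otimes_{\mathcal{I}}\widehat{A}'$ by $x\mapsto1\otimes H_1(x)$. Then $H\boxtimes\mathrm{id}_{DD}$ is a homotopy of Type D morphisms between $F\boxtimes\mathrm{id}_{DD}$ and $G\boxtimes\mathrm{id}_{DD}$, i.e. \[ F\boxtimes\mathrm{id}_{DD}-G\boxtimes\mathrm{id}_{DD}=(\mu_2\otimes\mathrm{id})(\mathrm{id}\otimes H\boxtimes\mathrm{id}_{DD})\delta+(\mu_2\otimes\mathrm{id})(\mathrm{id}\otimes\delta')(H\boxtimes\mathrm{id}_{DD})+(\mu_1\otimes|\mathrm{id}|)(H\boxtimes\mathrm{id}_{DD}), \] where $\delta,\delta'$ are the Type D structure maps of $\widehat{A}\boxtimes\widehat{DD}$ and $\widehat{A}'\boxtimes\widehat{DD}$.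
   Context: $\mathcal{I}=\mathbb{Z}e_1\times\cdots\times\mathbb{Z}e_k$; $\mathcal{B},\mathcal{B}'$ differential bigraded algebras over $\mathcal{I}$ (bigraded by intrinsic and homological degree $\deg_h$, degree-$(0,0)$ part $\mathcal{I}$, differential $\mu_1$ of bidegree $(0,1)$, $\mu_1^2=0$, $\mu_1(xy)=(-1)^{\deg_hy}\mu_1(x)y+x\mu_1(y)$, multiplication $\mu_2$). $\widehat{A},\widehat{A}'$ are right dg $\mathcal{B}$-modules (differential $m_1$, resp. $m_1'$, of bidegree $(0,1)$ squaring to zero with $m_1(xb)=(-1)^{\deg_hb}m_1(x)b+x\mu_1(b)$; actions $m_2,m_2'$), free over $\mathbb{Z}$ with bases of homogeneous elements having unique right idempotents. $|\mathrm{id}|$ multiplies by $(-1)^{\deg_h}$. $\widehat{DD}=\mathcal{I}$ is a rank-one Type DD bimodule: $\delta_{DD}(1)=\sum_sa_s\otimes c_s^{op}\in\mathcal{B}\otimes_{\mathcal{I}}(\mathcal{B}')^{op}$ of bidegree $(0,1)$ with $\sum_s(-1)^{\deg_hc_s}\mu_1(a_s)\otimes c_s^{op}+\sum_sa_s\otimes\mu_1(c_s)^{op}+\sum_{s,t}(-1)^{\deg_h(a_t)\deg_h(c_s)}a_sa_t\otimes c_t^{op}c_s^{op}=0$. $\widehat{A}\boxtimes\widehat{DD}$: $\widehat{A}$ with $\delta(x)=1\otimes m_1(x)+\sum_s(-1)^{\deg_h(xa_s)\deg_h(c_s)}c_s\otimes xa_s$ (similarly $\delta'$). An $\mathcal{A}_\infty$-morphism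 $F$ with $F_n=0$, $n>2$: bigrading-preserving $\mathcal{I}$-linear $F_1$ and $F_2:\widehat{A}\otimes_{\mathcal{I}}\mathcal{B}\to\widehat{A}'$ lowering $\deg_h$ by one, with $m_1'F_1=F_1m_1$, $m_1'F_2+m_2'(F_1\otimes\mathrm{id})=F_1m_2-F_2(m_1\otimes|\mathrm{id}|)-F_2(\mathrm{id}\otimes\mu_1)$, $-m_2'(F_2\otimes|\mathrm{id}|)=F_2(m_2\otimes\mathrm{id})-F_2(\mathrm{id}\otimes\mu_2)$. $F\boxtimes\mathrm{id}_{DD}(x)=1\otimes F_1(x)+\sum_s(-1)^{\deg_h(c_s)(1+\deg_hF_2(x\otimes a_s))}c_s\otimes F_2(x\otimes a_s)$. An $\mathcal{A}_\infty$ homotopy $H$ with $H_n=0$ for $n>1$ is an $\mathcal{I}$-linear $H_1:\widehat{A}\to\widehat{A}'$ preserving intrinsic degree and lowering $\deg_h$ by one with $F_1-G_1=m_1'H_1+H_1m_1$ and $F_2-G_2=-m_2'(H_1\otimes|\mathrm{id}|)+H_1m_2$. *)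

From HB Require Import structures.
From mathcomp Require Import all_boot all_order all_algebra.
Set Implicit Arguments. Unset Strict Implicit. Unset Printing Implicit Defensive.
Import Order.TTheory GRing.Theory Num.Theory.
Local Open Scope ring_scope.

Definition ksign (n : int) : int := if odd (absz n) then -1 else 1.

(* hom i h x : x is homogeneous of intrinsic degree i and homological degree h.
   is_bigrading: M is the direct sum of the subgroups hom i h. *)
Definition is_bigrading (M : zmodType) (hom : int -> int -> M -> Prop) : Prop :=
  (forall i h, hom i h 0) /\
  (forall i h x y, hom i h x -> hom i h y -> hom i h (x - y)) /\
  (forall x : M, exists s : seq ((int * int) * M),
      (forall p, p \in s -> hom p.1.1 p.1.2 p.2) /\ x = \sum_(p <- s) p.2) /\
  (forall s : seq ((int * int) * M), uniq (map fst s) ->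
      (forall p, p \in s -> hom p.1.1 p.1.2 p.2) -> \sum_(p <- s) p.2 = 0 ->
      forall p, p \in s -> p.2 = 0).

(* Differential bigraded algebra over I = Z e_1 x ... x Z e_k, the e_i being
   the images in B of the standard idempotents of I. *)
Definition dg_algebra_over_I (k : nat) (B : nzRingType)
    (hom : int -> int -> B -> Prop) (e : 'I_k -> B) (mu1 : B -> B) : Prop :=
  is_bigrading hom /\
  (forall i h j l x y, hom i h x -> hom j l y -> hom (i + j) (h + l) (x * y)) /\
  (* the degree-(0,0) part is I *)
  (forall i j, e i * e j = if i == j then e i else 0) /\
  (\sum_i e i = 1) /\
  (forall x, hom 0 0 x <-> exists n : 'I_k -> int, x = \sum_i e i *~ n i) /\
  (forall n : 'I_k -> int, \sum_i e i *~ n i = 0 -> forall i, n i = 0) /\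
  (forall x y, mu1 (x - y) = mu1 x - mu1 y) /\
  (forall i h x, hom i h x -> hom i (h + 1) (mu1 x)) /\
  (forall x, mu1 (mu1 x) = 0) /\
  (forall x y j l, hom j l y -> mu1 (x * y) = mu1 x * y *~ ksign l + x * mu1 y).

(* Right dg B-module, free over Z with a basis of homogeneous elements having
   unique right idempotents. *)
Definition dg_right_module (k : nat) (B : nzRingType)
    (homB : int -> int -> B -> Prop) (e : 'I_k -> B) (mu1 : B -> B)
    (A : zmodType) (homA : int -> int -> A -> Prop)
    (m1 : A -> A) (m2 : A -> B -> A) : Prop :=
  is_bigrading homA /\
  (forall x y b, m2 (x - y) b = m2 x b - m2 y b) /\
  (forall x b c, m2 x (b - c) = m2 x b - m2 x c) /\
  (forall x, m2 x 1 = x) /\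
  (forall x b c, m2 (m2 x b) c = m2 x (b * c)) /\
  (forall i h j l x b, homA i h x -> homB j l b -> homA (i + j) (h + l) (m2 x b)) /\
  (forall x y, m1 (x - y) = m1 x - m1 y) /\
  (forall i h x, homA i h x -> homA i (h + 1) (m1 x)) /\
  (forall x, m1 (m1 x) = 0) /\
  (forall x b j l, homB j l b -> m1 (m2 x b) = m2 (m1 x) b *~ ksign l + m2 x (mu1 b)) /\
  exists (J : Type) (bas : J -> A),
    (forall x, exists (n : nat) (j : 'I_n -> J) (c : 'I_n -> int),
        x = \sum_i bas (j i) *~ c i) /\
    (forall (n : nat) (j : 'I_n -> J) (c : 'I_n -> int), injective j ->
        \sum_i bas (j i) *~ c i = 0 -> forall i, c i = 0) /\
    (forall j, exists i h, homA i h (bas j)) /\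
    (forall j, exists! i, m2 (bas j) (e i) = bas j).

(* Equality of two formal sums of pure tensors in M (x)_I N, where M is a right
   and N a left I-module (actions of the idempotents e_i given by actM, actN):
   two such sums are equal in M (x)_I N iff they agree under every
   I-balanced biadditive map (universal property of the tensor product). *)
Definition balanced (k : nat) (M N T : zmodType) (actM : M -> 'I_k -> M)
    (actN : 'I_k -> N -> N) (phi : M -> N -> T) : Prop :=
  (forall x y z, phi (x - y) z = phi x z - phi y z) /\
  (forall x y z, phi x (y - z) = phi x y - phi x z) /\
  (forall x i y, phi (actM x i) y = phi x (actN i y)).

Definition tensor_eq (k : nat) (M N : zmodType) (actM : M -> 'I_k -> M)
    (actN : 'I_k -> N -> N) (s t : seq (M * N)) : Prop :=
  forall (T : zmodType) (phi : M -> N -> T), balanced actM actN phi ->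
    \sum_(p <- s) phi p.1 p.2 = \sum_(p <- t) phi p.1 p.2.

(* Rank-one type DD bimodule: delta_DD(1) = sum_s a_s (x) c_s^op in
   B (x)_I (B')^op, each a_s, c_s homogeneous of bidegrees (ia s, ha s),
   (ic s, hc s), with total bidegree (0,1), satisfying the DD relation. *)
Definition rank_one_DD (k : nat) (B B' : nzRingType)
    (homB : int -> int -> B -> Prop) (e : 'I_k -> B) (mu1 : B -> B)
    (homB' : int -> int -> B' -> Prop) (e' : 'I_k -> B') (mu1' : B' -> B')
    (n : nat) (a : 'I_n -> B) (c : 'I_n -> B') (ia ha ic hc : 'I_n -> int) : Prop :=
  (forall s, homB (ia s) (ha s) (a s)) /\
  (forall s, homB' (ic s) (hc s) (c s)) /\
  (forall s, ia s + ic s = 0 /\ ha s + hc s = 1) /\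
  tensor_eq (fun b i => b * e i) (fun i (d : B') => d * e' i)
    ([seq (mu1 (a s), c s *~ ksign (hc s)) | s <- enum 'I_n] ++
     [seq (a s, mu1' (c s)) | s <- enum 'I_n] ++
     flatten [seq [seq (a s * a t, (c s * c t) *~ ksign (ha t * hc s))
                  | t <- enum 'I_n] | s <- enum 'I_n])
    [::].

(* A_infinity morphism F : A -> A' with F_n = 0 for n > 2 (data F1, F2, with
   F2 : A (x)_I B -> A' given as an I-balanced biadditive map). *)
Definition Ainf_morphism2 (k : nat) (B : nzRingType)
    (homB : int -> int -> B -> Prop) (e : 'I_k -> B) (mu1 : B -> B)
    (A A' : zmodType) (homA : int -> int -> A -> Prop) (homA' : int -> int -> A' -> Prop)
    (m1 : A -> A) (m2 : A -> B -> A) (m1' : A' -> A') (m2' : A' -> B -> A')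
    (F1 : A -> A') (F2 : A -> B -> A') : Prop :=
  (forall x y, F1 (x - y) = F1 x - F1 y) /\
  (forall x i, F1 (m2 x (e i)) = m2' (F1 x) (e i)) /\
  (forall i h x, homA i h x -> homA' i h (F1 x)) /\
  (forall x y b, F2 (x - y) b = F2 x b - F2 y b) /\
  (forall x b d, F2 x (b - d) = F2 x b - F2 x d) /\
  (forall x i b, F2 (m2 x (e i)) b = F2 x (e i * b)) /\
  (forall x b i, F2 x (b * e i) = m2' (F2 x b) (e i)) /\
  (forall i h j l x b, homA i h x -> homB j l b -> homA' (i + j) (h + l - 1) (F2 x b)) /\
  (forall x, m1' (F1 x) = F1 (m1 x)) /\
  (forall x b j l, homB j l b ->
     m1' (F2 x b) + m2' (F1 x) b = F1 (m2 x b) - F2 (m1 x) (b *~ ksign l) - F2 x (mu1 b)) /\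
  (forall x b d j l, homB j l d ->
     - m2' (F2 x b) (d *~ ksign l) = F2 (m2 x b) d - F2 x (b * d)).

(* A_infinity homotopy H between F and G with H_n = 0 for n > 1. *)
Definition Ainf_homotopy1 (k : nat) (B : nzRingType)
    (homB : int -> int -> B -> Prop) (e : 'I_k -> B)
    (A A' : zmodType) (homA : int -> int -> A -> Prop) (homA' : int -> int -> A' -> Prop)
    (m1 : A -> A) (m2 : A -> B -> A) (m1' : A' -> A') (m2' : A' -> B -> A')
    (F1 G1 : A -> A') (F2 G2 : A -> B -> A') (H1 : A -> A') : Prop :=
  (forall x y, H1 (x - y) = H1 x - H1 y) /\
  (forall x i, H1 (m2 x (e i)) = m2' (H1 x) (e i)) /\
  (forall i h x, homA i h x -> homA' i (h - 1) (H1 x)) /\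
  (forall x, F1 x - G1 x = m1' (H1 x) + H1 (m1 x)) /\
  (forall x b j l, homB j l b ->
     F2 x b - G2 x b = - m2' (H1 x) (b *~ ksign l) + H1 (m2 x b)).

(* Elements of B' (x)_I A are represented by formal sums (lists) of pure tensors.
   The maps below are evaluated on a homogeneous x of homological degree hx. *)

Definition box_delta (B B' : nzRingType) (A : zmodType) (m1 : A -> A) (m2 : A -> B -> A)
    (n : nat) (a : 'I_n -> B) (c : 'I_n -> B') (ha hc : 'I_n -> int)
    (hx : int) (x : A) : seq (B' * A) :=
  (1, m1 x) :: [seq (c s, m2 x (a s) *~ ksign ((hx + ha s) * hc s)) | s <- enum 'I_n].

Definition box_morph (B B' : nzRingType) (A A' : zmodType) (F1 : A -> A') (F2 : A -> B -> A')
    (n : nat) (a : 'I_n -> B) (c : 'I_n -> B') (ha hc : 'I_n -> int)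
    (hx : int) (x : A) : seq (B' * A') :=
  (1, F1 x) :: [seq (c s, F2 x (a s) *~ ksign (hc s * (1 + (hx + ha s - 1))))
               | s <- enum 'I_n].

Definition box_homotopy (B' : nzRingType) (A A' : zmodType) (H1 : A -> A') (x : A)
  : seq (B' * A') := [:: (1, H1 x)].

(* (mu2 (x) id) o (id (x) Phi) on formal sums *)
Definition mu2_id_after (B' : nzRingType) (A A' : zmodType) (Phi : A -> seq (B' * A'))
    (L : seq (B' * A)) : seq (B' * A') :=
  flatten [seq [seq (p.1 * q.1, q.2) | q <- Phi p.2] | p <- L].

(* (mu1 (x) |id|) on a formal sum whose second components have homological degree d *)
Definition mu1_absid (B' : nzRingType) (A' : zmodType) (mu1' : B' -> B') (d : int)
    (L : seq (B' * A')) : seq (B' * A') :=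
  [seq (mu1' p.1, p.2 *~ ksign d) | p <- L].

Definition neg_sum (B' : nzRingType) (A' : zmodType) (L : seq (B' * A')) :=
  [seq (p.1, - p.2) | p <- L].

(* In the
   [1 (x) _] components the claim is the homotopy relation for H1 together with
   mu1'(1) = 0.  In the [c_s (x) _] components it is the homotopy relation for
   F2 - G2 evaluated at a_s, the Koszul signs matching because the homological
   degrees of a_s and c_s add up to 1. *)

From HB Require Import structures.
From mathcomp Require Import all_boot all_order all_algebra.
From mathcomp Require Import ring.
Import Order.TTheory GRing.Theory Num.Theory.
Local Open Scope ring_scope.

Definition additive_of {U V : zmodType} {f : U -> V}
    (fB : GRing.zmod_morphism f) : {additive U -> V} :=
  HB.pack f (GRing.isZmodMorphism.Build U V f fB).

Section ZmodMorphism.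
Context {U V : zmodType} {f : U -> V} (fB : GRing.zmod_morphism f).

Lemma zmod_morph0 : f 0 = 0.
Proof. exact: raddf0 (additive_of fB). Qed.

Lemma zmod_morphD : {morph f : x y / x + y}.
Proof. exact: raddfD (additive_of fB). Qed.

Lemma zmod_morphMz (z : int) : {morph f : x / x *~ z}.
Proof. move=> x; exact: raddfMz (additive_of fB) z x. Qed.

End ZmodMorphism.

Lemma ksignE (n : int) : ksign n = (-1) ^ n.
Proof. by rewrite expN1r /ksign -signr_odd; case: odd. Qed.

Lemma ksignD (p q : int) : ksign (p + q) = ksign p * ksign q.
Proof. by rewrite !ksignE exprzDr // unitrN1. Qed.

Lemma ksignN (p : int) : ksign (- p) = ksign p.
Proof. by rewrite /ksign abszN. Qed.

Lemma ksign_dual {l h : int} : l + h = 1 -> ksign h = - ksign l.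
Proof.
move=> lh; have : ksign l * ksign h = -1 by rewrite -ksignD lh.
by rewrite /ksign; case: odd; case: odd; rewrite ?mulN1r ?mul1r ?opprK.
Qed.

Lemma dg_algebra_mu1_1 {k : nat} {R : nzRingType} {hom : int -> int -> R -> Prop}
    {e : 'I_k -> R} {mu1 : R -> R} :
  dg_algebra_over_I hom e mu1 -> mu1 1 = 0.
Proof.
move=> [_ [_ [_ [sum_e [hom00 [_ [_ [_ [_ leibniz]]]]]]]]].
have hom1 : hom 0 0 1.
  by apply/hom00; exists (fun _ => 1); rewrite -sum_e; apply: eq_bigr.
have := leibniz 1 1 0 0 hom1; rewrite !mulr1 mul1r mulr1z.
by move=> /(congr1 (fun z => z - mu1 1)); rewrite addrK subrr.
Qed.

Lemma box_homotopy_component {k : nat} {B : nzRingType}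
    {homB : int -> int -> B -> Prop} {e : 'I_k -> B}
    {A A' : zmodType} {homA : int -> int -> A -> Prop} {homA' : int -> int -> A' -> Prop}
    {m1 : A -> A} {m2 : A -> B -> A} {m1' : A' -> A'} {m2' : A' -> B -> A'}
    {F1 G1 H1 : A -> A'} {F2 G2 : A -> B -> A'}
    {x : A} {hx : int} {b : B} {j l h : int} :
  Ainf_homotopy1 homB e homA homA' m1 m2 m1' m2' F1 G1 F2 G2 H1 ->
  GRing.zmod_morphism (m2' (H1 x)) -> homB j l b -> l + h = 1 ->
  (F2 x b - G2 x b) *~ ksign (h * (1 + (hx + l - 1)))
    = H1 (m2 x b *~ ksign ((hx + l) * h)) + m2' (H1 x) b *~ ksign ((hx - 1 + l) * h).
Proof.
move=> [H1B [_ [_ [_ homotopy2]]]] m2'B homb lh.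
have -> : 1 + (hx + l - 1) = hx + l by rewrite addrC subrK.
rewrite (homotopy2 _ _ _ _ homb) mulrzDl addrC [(hx + l) * h]mulrC.
rewrite (zmod_morphMz H1B) (zmod_morphMz m2'B); congr (_ + _).
rewrite mulNrz -mulrzA -mulrNz; congr (_ *~ _).
have -> : (hx - 1 + l) * h = h * (hx + l) - h by ring.
by rewrite ksignD ksignN (ksign_dual lh) mulrN mulrC.
Qed.

Theorem proposition6p52 (k : nat)
  (B B' : nzRingType)
  (homB : int -> int -> B -> Prop) (homB' : int -> int -> B' -> Prop)
  (e : 'I_k -> B) (e' : 'I_k -> B') (mu1 : B -> B) (mu1' : B' -> B')
  (A A' : zmodType)
  (homA : int -> int -> A -> Prop) (homA' : int -> int -> A' -> Prop)
  (m1 : A -> A) (m2 : A -> B -> A) (m1' : A' -> A') (m2' : A' -> B -> A')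
  (n : nat) (a : 'I_n -> B) (c : 'I_n -> B') (ia ha ic hc : 'I_n -> int)
  (F1 G1 H1 : A -> A') (F2 G2 : A -> B -> A') :
  dg_algebra_over_I homB e mu1 ->
  dg_algebra_over_I homB' e' mu1' ->
  dg_right_module homB e mu1 homA m1 m2 ->
  dg_right_module homB e mu1 homA' m1' m2' ->
  rank_one_DD homB e mu1 homB' e' mu1' a c ia ha ic hc ->
  Ainf_morphism2 homB e mu1 homA homA' m1 m2 m1' m2' F1 F2 ->
  Ainf_morphism2 homB e mu1 homA homA' m1 m2 m1' m2' G1 G2 ->
  Ainf_homotopy1 homB e homA homA' m1 m2 m1' m2' F1 G1 F2 G2 H1 ->
  forall (ix hx : int) (x : A), homA ix hx x ->
  tensor_eq (fun (b : B') i => b * e' i) (fun i (y : A') => m2' y (e i))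
    (box_morph F1 F2 a c ha hc hx x ++ neg_sum (box_morph G1 G2 a c ha hc hx x))
    (mu2_id_after (@box_homotopy B' A A' H1) (box_delta m1 m2 a c ha hc hx x) ++
     mu2_id_after (box_delta m1' m2' a c ha hc (hx - 1)) (@box_homotopy B' A A' H1 x) ++
     mu1_absid mu1' (hx - 1) (@box_homotopy B' A A' H1 x)).
Proof.
move=> _ dgB' _ [_ [_ [m2'B _]]] [hom_a [_ [deg_ac _]]] _ _ htpy.
move=> _ hx x _ T phi [phiBl [phiBr _]].
have phi0l y : phi 0 y = 0 := zmod_morph0 (fun b d => phiBl b d y).
have phiDr b : {morph phi b : y z / y + z} := zmod_morphD (phiBr b).
rewrite /box_morph /neg_sum /mu2_id_after /box_delta /box_homotopy /mu1_absid.
rewrite !(big_cat, big_cons, big_nil, big_flatten, big_map) /=.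
rewrite (dg_algebra_mu1_1 dgB') phi0l !addr0 !mulr1 addrACA [RHS]addrACA.
congr (_ + _).
  have [_ [_ [_ [homotopy1 _]]]] := htpy.
  by rewrite -phiDr homotopy1 phiDr addrC.
rewrite -!big_split; apply: eq_bigr => s _ /=.
rewrite big_seq1 /= mulr1 mul1r -!phiDr -mulrzBl.
by rewrite (box_homotopy_component htpy (m2'B _) (hom_a s) (deg_ac s).2).
Qed.
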